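(* Let $d\ge 2$ be an integer. Let $(\mathrm{CD}_d,H_d)$ be a combinatorial description of $\mathcal{W}_d$ which is compatible with $\mathrm{RT}$ via equivariant surjections $p_n:\mathrm{RT}(n)\to\mathrm{CD}_d(n)$. Then every $p_n$ is a bijection; that is, the only combinatorial description of $\mathcal{W}_d$ compatible with $\mathrm{RT}$ is $\mathrm{RT}$ itself (with $H_d$ corresponding to $F$).
   Context: A rooted tree on a finite vertex set $V\subset\mathbb{N}$ is a set $E$ of ordered pairs of elements of $V$ (an edge $(v,w)$ means $w$ is a child of $v$) such that exactly one vertex $r$ (the root) has no parent, every other vertex has exactly one parent, and every vertex is connected to the root by following parents. For $v\in V$, $\tau_v$ is the subtree of $v$ and all its descendants. $\mathrm{RT}(n)$ is the set of rooted trees on $[n]=\{1,\dots,n\}$; $\mathfrak{S}_n$ acts on $\mathrm{RT}(n)$ by relabelling vertices. Let $\mathcal{C}_d=C^\infty(\mathbb{R}^d,\mathbb{R}^d)$, $g_j$ the $j$-th coordinate, $\partial_j=\partial/\partial x_j$. For $\tau$ with root $r$ whose children are $v_1,\dots,v_k$, define recursively the $n$-linear map $F(\tau)((f^i)_{i\in V})=\sum_{j_1,\dots,j_k=1}^d F(\tau_{v_1})((f^i)_{i\in V(\tau_{v_1})})_{j_1}\cdots F(\tau_{v_k})((f^i)_{i\in V(\tau_{v_k})})_{j_k}\,\partial_{j_1}\cdots\partial_{j_k}f^r$ (for a single vertex $F(\tau)=f^r$). $\mathcal{W}_d(n)$ is the real vector space spanned by $\{F(\tau):\tau\in\mathrm{RT}(n)\}$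 inside the $n$-linear maps $\mathcal{C}_d^n\to\mathcal{C}_d$; $\mathfrak{S}_n$ acts on it by permuting the $n$ inputs, and $F$ is $\mathfrak{S}_n$-equivariant. A combinatorial description of $\mathcal{W}_d$ is a pair $(\mathrm{CD}_d,H_d)$ where $\mathrm{CD}_d=(\mathrm{CD}_d(n))_{n}$ is a sequence of sets, $\mathrm{CD}_d(n)$ carrying an action of $\mathfrak{S}_n$, and $H_d^n:\mathrm{CD}_d(n)\to\mathcal{W}_d(n)$ are $\mathfrak{S}_n$-equivariant maps whose images span $\mathcal{W}_d(n)$. It is compatible with $\mathrm{RT}$ if there are $\mathfrak{S}_n$-equivariant surjections $p_n:\mathrm{RT}(n)\to\mathrm{CD}_d(n)$ with $F(\tau)=H^n_d(p_n(\tau))$ for all $\tau\in\mathrm{RT}(n)$. *)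

From HB Require Import structures.
From mathcomp Require Import all_boot all_order all_algebra all_fingroup.
From mathcomp Require Import all_classical all_reals all_analysis.
Set Implicit Arguments. Unset Strict Implicit. Unset Printing Implicit Defensive.
Import Order.TTheory GRing.Theory Num.Theory.
Import numFieldNormedType.Exports.
Local Open Scope ring_scope.

Section Defs.
Variables (R : realType) (d : nat).

(* Points of R^d are row vectors 'rV[R]_d; x 0 j is the j-th coordinate. *)
Definition evec (j : 'I_d) : 'rV[R]_d := delta_mx 0 j.

Definition partial (j : 'I_d) (g : 'rV[R]_d -> 'rV[R]_d) : 'rV[R]_d -> 'rV[R]_d :=
  fun x => 'D_(evec j) g x.

Definition iter_partial (s : seq 'I_d) (g : 'rV[R]_d -> 'rV[R]_d) :=
  foldr partial g s.

Definition smooth (g : 'rV[R]_d -> 'rV[R]_d) : Prop :=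
  forall s : seq 'I_d, continuous (iter_partial s g) /\
    (forall (j : 'I_d) (x : 'rV[R]_d), derivable (iter_partial s g) x (evec j)).

Definition Cd := {g : 'rV[R]_d -> 'rV[R]_d | smooth g}.

Definition nmap (n : nat) := ('I_n -> Cd) -> 'rV[R]_d -> 'rV[R]_d.

End Defs.

(* An edge (v, w) means w is a child of v. *)
Definition parents n (E : {set 'I_n * 'I_n}) (w : 'I_n) : {set 'I_n} :=
  [set v | (v, w) \in E].
Definition children n (E : {set 'I_n * 'I_n}) (v : 'I_n) : {set 'I_n} :=
  [set w | (v, w) \in E].

Definition is_rtree n (E : {set 'I_n * 'I_n}) : bool :=
  [exists r : 'I_n,
     [forall v : 'I_n, #|parents E v| == (v != r)] &&
     [forall v : 'I_n, connect (fun a b => (a, b) \in E) r v]].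

Definition RT (n : nat) := {E : {set 'I_n * 'I_n} | is_rtree E}.

Definition relabel n (s : {perm 'I_n}) (E : {set 'I_n * 'I_n}) : {set 'I_n * 'I_n} :=
  [set (s e.1, s e.2) | e in E].

Definition root_of n (E : {set 'I_n * 'I_n}) : option 'I_n :=
  [pick r | #|parents E r| == 0%N].

Section Elementary.
Variables (R : realType) (d : nat).

(* F(tau_v)((f^i)_{i in V(tau_v)}), computed by recursion on the subtree of v
   (k is fuel, at least the height of the subtree plus one):
   F(tau_v) = sum_{j_1..j_k} F(tau_{v_1})_{j_1} ... F(tau_{v_k})_{j_k} d_{j_1}...d_{j_k} f^v,
   where v_1, ..., v_k are the children of v. *)
Fixpoint Fsub n (E : {set 'I_n * 'I_n}) (f : 'I_n -> Cd R d) (k : nat) (v : 'I_n)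
  : 'rV[R]_d -> 'rV[R]_d :=
  match k with
  | 0 => fun _ => 0
  | k'.+1 => fun x =>
      let cs := enum (children E v) in
      \sum_(J : (size cs).-tuple 'I_d)
         (\prod_(i < size cs) (Fsub E f k' (nth v cs i) x) 0 (tnth J i))
           *: iter_partial (val J) (proj1_sig (f v)) x
  end.

Definition F n (t : RT n) : nmap R d n :=
  fun f x => match root_of (val t) with
             | Some r => Fsub (val t) f n r x
             | None => 0
             end.

Definition in_W n (Phi : nmap R d n) : Prop :=
  exists a : RT n -> R, Phi = fun f x => \sum_(t : RT n) a t *: F t f x.

Definition permact n (s : {perm 'I_n}) (Phi : nmap R d n) : nmap R d n :=
  fun f => Phi (f \o s).

End Elementary.

(* Distinct rooted trees have distinct elementary differentials, so F, and with
   it every compatible p_n, is injective.  Given an edge (u, w) of t that is not an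
   edge of t', feed both trees the polynomial fields
     f^v = x_i0 ^ a_v * x_i1 ^ b_v * e_(D v),
   where D w = i1 and D v = i0 otherwise, b_v = [v = u] and a_v = #children_t(v) - b_v.
   In F(t)(f) every f^v is differentiated once along x_(D c) for each child c, i.e.
   exactly a_v times along x_i0 and b_v times along x_i1, so F(t)(f)(0) is a product
   of nonzero factorials.  In F(t')(f) the vertex u has no child w, so the factor
   x_i1 of f^u survives and F(t')(f)(0) = 0. *)

From HB Require Import structures.
From mathcomp Require Import all_boot all_order all_algebra all_fingroup.
From mathcomp Require Import all_classical all_reals all_analysis.
From mathcomp Require Import ring.
Set Implicit Arguments. Unset Strict Implicit. Unset Printing Implicit Defensive.
Import Order.TTheory GRing.Theory Num.Theory.
Import numFieldNormedType.Exports.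
Local Open Scope ring_scope.

Section MonomialFields.
Variables (R : realType) (d : nat) (i0 i1 : 'I_d).

Lemma is_derive_coord (x v : 'rV[R]_d) (j : 'I_d) :
  is_derive x v (fun y : 'rV[R]_d => y 0 j) (v 0 j).
Proof.
have did : derivable id x v by exact: ex_derive.
apply: DeriveDef; first exact: (derivable_mxP _ _ _).1 did 0 j.
by have /matrixP/(_ 0 j) := derive_mx did; rewrite derive_id mxE.
Qed.

Definition monomial (c : R) (a b : nat) (x : 'rV[R]_d) : R :=
  c * (x 0 i0 ^+ a * x 0 i1 ^+ b).

Lemma is_derive_monomial c a b x v :
  is_derive x v (monomial c a b)
   (monomial (c * a%:R) a.-1 b x * v 0 i0 + monomial (c * b%:R) a b.-1 x * v 0 i1).
Proof.
have -> : monomial c a b =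
    c \*: ((fun y : 'rV[R]_d => y 0 i0) ^+ a * (fun y : 'rV[R]_d => y 0 i1) ^+ b).
  by apply/funext => y; rewrite /monomial /= !exprfctE.
have h0 := is_derive_coord x v i0; have h1 := is_derive_coord x v i1.
by apply: is_derive_eq; rewrite /monomial /= !exprfctE /GRing.scale /=; ring.
Qed.

Lemma continuous_monomial c a b : continuous (monomial c a b).
Proof.
have cX j k : continuous (fun y : 'rV[R]_d => y 0 j ^+ k).
  have -> : (fun y : 'rV[R]_d => y 0 j ^+ k) =
            (@GRing.exp R)^~ k \o (fun y : 'rV[R]_d => y 0 j) by [].
  move=> y; apply: continuous_comp; [exact: coord_continuous | exact: exprn_continuous].
move=> y.
by have := continuousM (@cst_continuous _ _ c y) (continuousM (cX i0 a y) (cX i1 b y)).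
Qed.

Definition monomial_field c a b (e : 'rV[R]_d) (x : 'rV[R]_d) : 'rV[R]_d :=
  monomial c a b x *: e.


Lemma monomial_field_entry c a b e i j :
  (fun x => monomial_field c a b e x i j) = monomial (c * e i j) a b.
Proof. by apply/funext => x; rewrite /monomial_field /monomial !mxE; ring. Qed.

Lemma derivable_monomial_field c a b e x v : derivable (monomial_field c a b e) x v.
Proof.
apply/derivable_mxP => i j; rewrite monomial_field_entry.
exact: (@ex_derive _ _ _ _ _ _ _ (is_derive_monomial _ _ _ x v)).
Qed.

Lemma continuous_monomial_field c a b e : continuous (monomial_field c a b e).
Proof. by move=> x; apply: continuousZr_tmp; exact: continuous_monomial. Qed.

Lemma evec_entry (j k : 'I_d) : evec R j 0 k = (k == j)%:R.
Proof. by rewrite mxE eqxx. Qed.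

Hypothesis i01 : i0 != i1.

Lemma partial_monomial_field c a b e j :
  partial j (monomial_field c a b e) =
  monomial_field (c * (a * (j == i0) + b * (j == i1))%N%:R)
    (a - (j == i0))%N (b - (j == i1))%N e.
Proof.
apply/funext => x; rewrite /partial derive_mx; last exact: derivable_monomial_field.
apply/matrixP => i k; rewrite !mxE monomial_field_entry.
rewrite (@derive_val _ _ _ _ _ _ _ (is_derive_monomial _ _ _ _ _)).
rewrite !evec_entry ![(_ == j)]eq_sym /monomial.
have [->|_] := eqVneq j i0; last have [_|_] := eqVneq j i1.
- by rewrite (negbTE i01) /= subn1 subn0 muln1 muln0 addn0; ring.
- by rewrite /= subn1 subn0 muln1 muln0 add0n; ring.
- by rewrite /= !muln0; ring.
Qed.

Lemma iter_partial_monomial_field s c a b e :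
  iter_partial s (monomial_field c a b e) =
  monomial_field (c * (a ^_ count_mem i0 s * b ^_ count_mem i1 s * all (pred2 i0 i1) s)%N%:R)
    (a - count_mem i0 s)%N (b - count_mem i1 s)%N e.
Proof.
elim: s => [|j s IH]; first by rewrite /= !subn0 mulr1.
rewrite /iter_partial /= -/(iter_partial s _) IH partial_monomial_field -mulrA -natrM.
rewrite -!subnDA ![(_ + (j == _))%N]addnC.
have [->|_] := eqVneq j i0; last have [_|_] := eqVneq j i1.
- by rewrite (negbTE i01) /= ffactnSr; congr (monomial_field (c * _%:R) _ _ e); ring.
- by rewrite /= ffactnSr; congr (monomial_field (c * _%:R) _ _ e); ring.
- by rewrite /= !muln0.
Qed.

Lemma iter_partial_monomial_field0 s c a b e :
  iter_partial s (monomial_field c a b e) 0 =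
  (c * (a`! * b`! *
     [&& all (pred2 i0 i1) s, count_mem i0 s == a & count_mem i1 s == b])%N%:R) *: e.
Proof.
have ffact_subn_eq0 n k : (n ^_ k * (n - k == 0) = n`! * (k == n))%N.
  case: (ltngtP k n) => [k_lt_n|n_lt_k|->]; last by rewrite subnn ffactnn.
  - by rewrite subn_eq0 leqNgt k_lt_n /= !muln0.
  - by rewrite ffact_small // mul0n muln0.
rewrite iter_partial_monomial_field /monomial_field /monomial !mxE !expr0n.
rewrite -!natrM -mulrA -natrM.
congr ((c * _%:R) *: e).
set k0 := count_mem i0 s; set k1 := count_mem i1 s; set A := all _ s.
rewrite [LHS](_ : _ = a ^_ k0 * (a - k0 == 0) * (b ^_ k1 * (b - k1 == 0)) * A)%N; last by ring.
rewrite !ffact_subn_eq0.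
by case: A; case: (k0 == a); case: (k1 == b); rewrite /= ?muln0 ?muln1.
Qed.

Lemma smooth_monomial_field c a b e : smooth (monomial_field c a b e).
Proof.
move=> s; rewrite iter_partial_monomial_field; split; first exact: continuous_monomial_field.
by move=> j x; exact: derivable_monomial_field.
Qed.

End MonomialFields.

Section ConnectSplit.
Variables (T : finType) (e : rel T).

Lemma connect_split_last x y :
  connect e x y -> y != x -> exists2 z, e z y & connect e x z.
Proof.
case/connectP => p; case/lastP: p => [|p z] /=; first by move=> _ ->; rewrite eqxx.
rewrite rcons_path last_rcons => /andP[xp zy] -> _.
by exists (last x p) => //; apply/connectP; exists p.
Qed.

Lemma connect_split_first x y :
  connect e x y -> y != x -> exists2 z, e x z & connect e z y.
Proof.
case/connectP => -[|z p] /= xp ->; first by rewrite eqxx.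
case/andP: xp => xz zp _.
by exists z => //; apply/connectP; exists p.
Qed.

End ConnectSplit.

Definition descendants n (E : {set 'I_n * 'I_n}) (v : 'I_n) : {set 'I_n} :=
  [set x | connect (fun a b => (a, b) \in E) v x].

Section RootedTree.
Variables (n : nat) (E : {set 'I_n * 'I_n}) (r : 'I_n).
Hypothesis card_parents : forall v, #|parents E v| = (v != r).
Hypothesis root_connect : forall v, connect (fun a b => (a, b) \in E) r v.
Local Notation edge := (fun a b : 'I_n => (a, b) \in E).

Lemma parent_uniq x z y : (x, y) \in E -> (z, y) \in E -> x = z.
Proof.
move=> xy zy; have : (#|parents E y| <= 1)%N by rewrite card_parents leq_b1.
by move/card_le1_eqP; apply; rewrite inE.
Qed.

Lemma root_no_parent x : (x, r) \notin E.
Proof.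
apply/negP => xr; have : (0 < #|parents E r|)%N by apply/card_gt0P; exists x; rewrite inE.
by rewrite card_parents eqxx.
Qed.

Lemma child_not_ancestor v c : (v, c) \in E -> ~~ connect edge c v.
Proof.
move=> vc; apply/negP => cv.
have has_parent y : connect edge c y -> exists2 z, edge z y & connect edge c z.
  move=> cy; have [->|yc] := eqVneq y c; first by exists v.
  exact: connect_split_last.
have desc_closed : fingraph.closed edge (connect edge c).
  move=> x y xy; apply/idP/idP => [cx|cy]; first exact: connect_trans cx (connect1 xy).
  by have [z zy cz] := has_parent y cy; rewrite (parent_uniq xy zy).
have /has_parent[z zr _] : connect edge c r.
  by have := closed_connect desc_closed (root_connect c); rewrite !inE connect0.
by rewrite (negbTE (root_no_parent z)) in zr.
Qed.

Lemma card_descendants_child v c :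
  (v, c) \in E -> (#|descendants E c| < #|descendants E v|)%N.
Proof.
move=> vc; apply/proper_card/properP; split.
  by apply/fintype.subsetP => x; rewrite !inE; apply: connect_trans (connect1 vc).
by exists v; rewrite !inE ?connect0 // child_not_ancestor.
Qed.

End RootedTree.

Lemma is_rtree_root n (E : {set 'I_n * 'I_n}) : is_rtree E ->
  exists r, [/\ forall v, #|parents E v| = (v != r),
    forall v, connect (fun a b => (a, b) \in E) r v & root_of E = Some r].
Proof.
case/existsP => r /andP[/forallP card_par /forallP root_con].
have {}card_par v : #|parents E v| = (v != r) by exact/eqP.
exists r; split => //; rewrite /root_of; case: pickP => [r' | /(_ r)].
  by rewrite card_par; case: (eqVneq r' r) => [->|].
by rewrite card_par eqxx.
Qed.

Section DirectedInputs.
Variables (R : realType) (d n : nat) (E : {set 'I_n * 'I_n}).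
Variables (D : 'I_n -> 'I_d) (f : 'I_n -> Cd R d).
Hypothesis f_directed :
  forall v s x j, j != D v -> iter_partial s (sval (f v)) x 0 j = 0.

Lemma Fsub_directed k v x j : j != D v -> Fsub E f k v x 0 j = 0.
Proof.
case: k => [|k] jD /=; first by rewrite mxE.
rewrite summxE big1 // => J _.
by rewrite mxE f_directed ?mulr0.
Qed.

(* Only the multi-index J = (D c)_c survives: any other J picks a coordinate of
   some F(tau_c) off its direction e_(D c). *)
Lemma Fsub_succ_directed k v x :
  Fsub E f k.+1 v x =
  (\prod_(c <- enum (children E v)) Fsub E f k c x 0 (D c))
    *: iter_partial (map D (enum (children E v))) (sval (f v)) x.
Proof.
rewrite /=; set cs := enum (children E v).
pose JD := map_tuple D (in_tuple cs).
rewrite (bigD1 JD) //= [X in _ + X]big1 ?addr0 => [|J JJD].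
  by rewrite (big_nth v) big_mkord; congr (_ *: _); apply: eq_bigr => i _;
     rewrite tnth_map (tnth_nth v).
have [i Ji] : exists i, tnth J i != tnth JD i.
  apply/existsP; apply: contraR JJD => /existsPn JJD.
  by apply/eqP/eq_from_tnth => i; apply/eqP; have := JJD i; rewrite negbK.
rewrite (bigD1 i) //= Fsub_directed ?mul0r ?scale0r //.
by move: Ji; rewrite tnth_map (tnth_nth v).
Qed.

End DirectedInputs.

Section TestInputs.
Variables (R : realType) (d : nat) (i0 i1 : 'I_d).
Hypothesis i01 : i0 != i1.
Variables (n : nat) (E : {set 'I_n * 'I_n}) (u w : 'I_n).

Definition test_dir (v : 'I_n) : 'I_d := if v == w then i1 else i0.

Definition test_input (v : 'I_n) : Cd R d :=
  exist _ (monomial_field i0 i1 1 (#|children E v| - (v == u)) (v == u) (evec R (test_dir v)))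
    (smooth_monomial_field i01 _ _ _ _).

Lemma test_input_directed v s x j :
  j != test_dir v -> iter_partial s (sval (test_input v)) x 0 j = 0.
Proof.
move=> jD; rewrite /= (iter_partial_monomial_field i01) /monomial_field.
by rewrite mxE evec_entry (negbTE jD) mulr0.
Qed.

Lemma count_test_dir_i1 (E' : {set 'I_n * 'I_n}) v :
  count_mem i1 (map test_dir (enum (children E' v))) = ((v, w) \in E').
Proof.
rewrite count_map (eq_count (a2 := pred1 w)) => [|c]; last first.
  by rewrite /= /test_dir; case: (c == w); rewrite ?eqxx // (negbTE i01).
by rewrite count_uniq_mem ?enum_uniq // mem_enum inE.
Qed.

Lemma count_test_dir_i0 (E' : {set 'I_n * 'I_n}) v :
  count_mem i0 (map test_dir (enum (children E' v))) =
  (#|children E' v| - ((v, w) \in E'))%N.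
Proof.
rewrite -count_test_dir_i1 cardE -(size_map test_dir) -(count_predC (pred1 i1)) addKn.
apply: eq_in_count => j /mapP[c _ ->] /=.
by rewrite /test_dir; case: (c == w); rewrite eqxx // eq_sym (negbTE i01).
Qed.

Lemma all_test_dir (s : seq 'I_n) : all (pred2 i0 i1) (map test_dir s).
Proof.
by apply/allP => j /mapP[c _ ->]; rewrite /test_dir; case: (c == w); rewrite /= eqxx ?orbT.
Qed.

Lemma iter_partial_test_input0 v : ((v, w) \in E) = (v == u) ->
  iter_partial (map test_dir (enum (children E v))) (sval (test_input v)) 0 =
  ((#|children E v| - (v == u))`! * (v == u)`!)%N%:R *: evec R (test_dir v).
Proof.
move=> vw; rewrite /= (iter_partial_monomial_field0 i01) mul1r all_test_dir.
by rewrite count_test_dir_i0 count_test_dir_i1 vw !eqxx muln1.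
Qed.

Lemma iter_partial_test_input0_no_edge (E' : {set 'I_n * 'I_n}) : (u, w) \notin E' ->
  iter_partial (map test_dir (enum (children E' u))) (sval (test_input u)) 0 = 0.
Proof.
move=> uw; rewrite /= (iter_partial_monomial_field0 i01) count_test_dir_i1 (negbTE uw) eqxx.
by rewrite /= !andbF muln0 mulr0n mulr0 scale0r.
Qed.

Lemma Fsub_test_input_eq0 (E' : {set 'I_n * 'I_n}) k v :
  (u, w) \notin E' -> connect (fun a b => (a, b) \in E') v u ->
  Fsub E' test_input k v 0 = 0.
Proof.
move=> uw; elim: k v => [//|k IH] v vu.
rewrite (Fsub_succ_directed _ test_input_directed).
have [->|vNu] := eqVneq v u.
  by rewrite iter_partial_test_input0_no_edge // scaler0.
rewrite eq_sym in vNu; have [c vc cu] := connect_split_first vu vNu.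
by rewrite (big_rem c) ?mem_enum ?inE //= IH // mxE mul0r scale0r.
Qed.

Section InTree.
Variable r : 'I_n.
Hypothesis card_parents : forall v, #|parents E v| = (v != r).
Hypothesis root_connect : forall v, connect (fun a b => (a, b) \in E) r v.
Hypothesis uw : (u, w) \in E.

Lemma Fsub_test_input_neq0 k v :
  (#|descendants E v| <= k)%N -> Fsub E test_input k v 0 0 (test_dir v) != 0.
Proof.
elim: k v => [|k IH] v desc_le.
  by move: desc_le; rewrite leqn0 cards_eq0 => /eqP/setP/(_ v); rewrite !inE connect0.
have vw : ((v, w) \in E) = (v == u).
  by apply/idP/eqP => [vw|->//]; exact: (parent_uniq card_parents vw uw).
rewrite (Fsub_succ_directed _ test_input_directed) mxE iter_partial_test_input0 // mxE.
rewrite evec_entry eqxx mulr1 mulf_neq0 // prodf_seq_neq0.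
apply/allP => c; rewrite mem_enum inE => vc; apply: IH.
by rewrite -ltnS (leq_trans (card_descendants_child card_parents root_connect vc)).
Qed.

End InTree.

End TestInputs.

Lemma F_neq_of_edge (R : realType) (d n : nat) (i0 i1 : 'I_d) (t t' : RT n) u w :
  i0 != i1 -> (u, w) \in val t -> (u, w) \notin val t' -> F (R := R) (d := d) t <> F t'.
Proof.
move=> i01 uw uw' Ftt'.
have [r [card_par root_con root_t]] := is_rtree_root (valP t).
have [r' [_ root_con' root_t']] := is_rtree_root (valP t').
pose f := test_input R i01 (val t) u w.
have := congr1 (fun G : nmap R d n => G f 0 0 (test_dir i0 i1 w r)) Ftt'.
rewrite /F root_t root_t' (Fsub_test_input_eq0 R i01 _ _ uw' (root_con' u)) mxE.
apply/eqP/(Fsub_test_input_neq0 R i01 card_par root_con uw).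
by rewrite (leq_trans (max_card _)) // card_ord.
Qed.

Lemma F_inj (R : realType) (d n : nat) : (1 < d)%N -> injective (@F R d n).
Proof.
move=> d_gt1 t t' Ftt'.
have i01 : Ordinal (ltnW d_gt1) != Ordinal d_gt1 by [].
apply/val_inj/eqP; rewrite finset.eqEsubset; apply/andP; split;
  apply/fintype.subsetP => -[u w] uw; apply/negPn/negP => uw'.
- exact: F_neq_of_edge i01 uw uw' Ftt'.
- exact: F_neq_of_edge i01 uw uw' (esym Ftt').
Qed.

Unset Implicit Arguments.
Theorem theorem3p1 (R : realType) (d : nat) (hd : (2 <= d)%N)
  (CD : nat -> Type)
  (act : forall n, {perm 'I_n} -> CD n -> CD n)
  (act1 : forall n (c : CD n), act n 1%g c = c)
  (actM : forall n (s t : {perm 'I_n}) (c : CD n), act n (s * t)%g c = act n t (act n s c))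
  (H : forall n, CD n -> nmap R d n)
  (H_in_W : forall n (c : CD n), in_W (H n c))
  (H_span : forall n (t : RT n), exists s : seq (CD n * R),
              F t = fun f x => \sum_(q <- s) q.2 *: H n q.1 f x)
  (H_equiv : forall n (s : {perm 'I_n}) (c : CD n), H n (act n s c) = permact s (H n c))
  (p : forall n, RT n -> CD n)
  (p_surj : forall n (c : CD n), exists t : RT n, p n t = c)
  (p_equiv : forall n (s : {perm 'I_n}) (t t' : RT n),
              val t' = relabel s (val t) -> p n t' = act n s (p n t))
  (p_compat : forall n (t : RT n), F t = H n (p n t)) :
  forall n, bijective (p n).
Proof.
move=> n.
have p_inj : injective (p n).
  by move=> t t' ptt'; apply: (F_inj (R := R) hd); rewrite !p_compat ptt'.
exists (fun c => sval (cid (p_surj n c))) => [t | c]; last by case: cid.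
by apply: p_inj; case: cid.
Qed.
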